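(* Let $X$ be a real normed space, $f:X\to\mathbb R\cup\{+\infty\}$ proper, $\bar x\in(\partial f)^{-1}(0)$, and $p,q\in(1,\infty)$ with $p^{-1}+q^{-1}=1$. Suppose the image $\mathrm{Im}\,\partial f=\bigcup_{x\in X}\partial f(x)$ is dense in $X^*$. Then the following are equivalent: (i) there exists $\gamma>0$ with $f(x)\ge f(\bar x)+\gamma\|x-\bar x\|^p$ for all $x\in X$; (ii) there exists $\kappa>0$ such that $\partial f$ is strongly $\frac qp$-subregular at $\bar x$ with parameters $\alpha=+\infty$ and $\kappa$, i.e. $\|x-\bar x\|\le\kappa\,d(0,\partial f(x))^{q/p}$ for all $x\in X$.
   Context: $\partial f(x):=\{\xi\in X^*: x\text{ is a global minimizer of } f-\langle\xi,\cdot\rangle\}$; $d(0,\partial f(x))=\inf\{\|\xi\|:\xi\in\partial f(x)\}$, equal to $+\infty$ if $\partial f(x)=\emptyset$. *)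

From HB Require Import structures.
From mathcomp Require Import all_boot all_order all_algebra.
From mathcomp Require Import all_classical all_reals all_analysis.
Set Implicit Arguments. Unset Strict Implicit. Unset Printing Implicit Defensive.
Import Order.TTheory GRing.Theory Num.Theory.
Import numFieldNormedType.Exports.
Local Open Scope classical_set_scope.
Local Open Scope ring_scope.

Section Defs.
Context {R : realType} {X : normedModType R}.

Definition dual_elt (xi : X -> R) : Prop :=
  (forall (a : R) (u v : X), xi (a *: u + v) = a * xi u + xi v) /\ continuous xi.

Definition dnorm (xi : X -> R) : \bar R :=
  ereal_sup [set (`|xi x|)%:E | x in [set x : X | `|x| <= 1]].

Definition proper_fun (f : X -> \bar R) : Prop :=
  (forall x, f x != -oo%E) /\ (exists x, f x != +oo%E).

(* Fenchel/Frechet-type global subdifferential: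
   xi ∈ ∂f(x) iff x is a global minimizer of f - <xi, .>. *)
Definition subdiff (f : X -> \bar R) (x : X) : set (X -> R) :=
  [set xi | dual_elt xi /\
     forall y, (f x - (xi x)%:E <= f y - (xi y)%:E)%E].

(* d(0, ∂f(x)) = inf of dual norms, +oo if ∂f(x) is empty. *)
Definition dist0_subdiff (f : X -> \bar R) (x : X) : \bar R :=
  ereal_inf [set dnorm xi | xi in subdiff f x].

Definition subdiff_image_dense (f : X -> \bar R) : Prop :=
  forall xi, dual_elt xi -> forall eps : R, 0 < eps ->
    exists x, exists2 eta, subdiff f x eta &
      (dnorm (fun y => (xi y - eta y)%R) < eps%:E)%E.

End Defs.

From HB Require Import structures.
From mathcomp Require Import all_boot all_order all_algebra.
From mathcomp Require Import all_classical all_reals all_analysis.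
From mathcomp Require Import ring lra.
Import Order.TTheory GRing.Theory Num.Theory.
Import numFieldNormedType.Exports.
Local Open Scope classical_set_scope.
Local Open Scope ring_scope.

(* (i) -> (ii): for eta in the subdifferential at x, the subgradient inequality
   towards xbar and the growth condition give
   gamma |x - xbar|^p <= eta (x - xbar) <= |eta| |x - xbar|, hence
   d(0, df(x)) >= gamma |x - xbar|^(p-1); raise this to the power
   q/p = 1/(p-1).
   (ii) -> (i): given y, Hahn-Banach yields a functional xi of norm
   t = c |y - xbar|^(p-1) with xi (y - xbar) = t |y - xbar|, and density a
   subgradient eta in df(x) within t/2 of xi.  Subregularity puts x within
   kappa (2t)^(q/p) of xbar, and the subgradient inequality at x gives
   f y >= f xbar + eta (y - xbar) - |eta| |x - xbar|
       >= f xbar + t |y - xbar| / 2 - kappa (2t)^q,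
   which is at least f xbar + (c/4) |y - xbar|^p for a suitable c. *)

Section LinearForm.
Context {R : realType} {X : normedModType R}.

Definition linear_form (phi : X -> R) :=
  forall (a : R) (u v : X), phi (a *: u + v) = a * phi u + phi v.

Lemma dnorm_ub (phi : X -> R) (c : R) :
  (forall z : X, `|z| <= 1 -> `|phi z| <= c) -> (dnorm phi <= c%:E)%E.
Proof. by move=> phic; apply: ge_ereal_sup => _ [z /= z1 <-]; rewrite lee_fin phic. Qed.

Context {phi : X -> R} (phi_lin : linear_form phi).

Lemma linear_form0 : phi 0 = 0.
Proof. by have := phi_lin 1 0 0; rewrite scale1r addr0 mul1r; lra. Qed.

Lemma linear_formZ a x : phi (a *: x) = a * phi x.
Proof. by have := phi_lin a x 0; rewrite !addr0 linear_form0 addr0. Qed.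

Lemma linear_formD x y : phi (x + y) = phi x + phi y.
Proof. by have := phi_lin 1 x y; rewrite scale1r mul1r. Qed.

Lemma linear_formN x : phi (- x) = - phi x.
Proof. by rewrite -scaleN1r linear_formZ mulN1r. Qed.

Lemma linear_formB x y : phi (x - y) = phi x - phi y.
Proof. by rewrite linear_formD linear_formN. Qed.

Lemma dnorm_linear_ge0 : (0 <= dnorm phi)%E.
Proof.
by apply: ereal_sup_ubound; exists 0; rewrite /= ?linear_form0 normr0.
Qed.

Lemma dnorm_le_norm c z : (dnorm phi <= c%:E)%E -> `|phi z| <= c * `|z|.
Proof.
move=> phic; have [->|z0] := eqVneq z 0; first by rewrite linear_form0 !normr0 mulr0.
have zgt0 : 0 < `|z| by rewrite normr_gt0.
have : (`|phi (`|z|^-1 *: z)|%:E <= dnorm phi)%E.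
  apply: ereal_sup_ubound; exists (`|z|^-1 *: z) => //=.
  by rewrite normrZ normfV normr_id mulVf ?gt_eqF.
move=> /le_trans/(_ phic); rewrite lee_fin linear_formZ normrM normfV normr_id.
by rewrite ler_pdivrMl // mulrC.
Qed.

Lemma linear_form_lipschitz_continuous {k : R} :
  0 < k -> (forall z, `|phi z| <= k * `|z|) -> continuous phi.
Proof.
move=> k_gt0 phi_le x; apply/cvgrPdist_lt => e e_gt0.
have : \forall t \near x, `|x - t| < e / k.
  by apply: cvgr_dist_lt; [exact: cvg_id | rewrite divr_gt0].
apply: filterS => t xt; rewrite -linear_formB.
by apply: le_lt_trans (phi_le _) _; rewrite -ltr_pdivlMl // mulrC.
Qed.

End LinearForm.

Section NormingFunctional.
Context {R : realType} {X : normedModType R}.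

(* A linear subspace of [X * R] lying below the norm; by [dominated_graph_uniq]
   it is the graph of a linear functional, defined on a subspace of [X] and
   dominated by the norm. *)
Definition norm_dominated_graph (G : set (X * R)) :=
  (forall a x y r s, G (x, r) -> G (y, s) -> G (a *: x + y, a * r + s)) /\
  (forall x r, G (x, r) -> r <= `|x|).

Lemma dominated_graph_uniq {G x r s} :
  norm_dominated_graph G -> G (x, r) -> G (x, s) -> r = s.
Proof.
move=> [Glin Gdom] Gr Gs.
have := Gdom _ _ (Glin (-1) _ _ _ _ Gr Gs); have := Gdom _ _ (Glin (-1) _ _ _ _ Gs Gr).
by rewrite scaleN1r addNr normr0; lra.
Qed.

Lemma dominated_graphZ a {G x r} :
  norm_dominated_graph G -> G (0, 0) -> G (x, r) -> G (a *: x, a * r).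
Proof. by move=> [Glin _] G00 /(Glin a _ _ _ _)/(_ G00); rewrite !addr0. Qed.

Lemma dominated_graph_line (u : X) :
  norm_dominated_graph [set z | exists t, z = (t *: u, t * `|u|)].
Proof.
split=> [a x y r s [t1 [-> ->]] [t2 [-> ->]]|x r [t [-> ->]]].
  by exists (a * t1 + t2); rewrite scalerDl scalerA mulrDl mulrA.
by rewrite normrZ ler_wpM2r // ler_norm.
Qed.

Lemma dominated_graph_bigcup {G0 : set (X * R)} {F : set (set (X * R))} :
  norm_dominated_graph G0 ->
  (forall G, F G -> norm_dominated_graph (G `|` G0)) -> total_on F subset ->
  norm_dominated_graph (\bigcup_(G in F) G `|` G0).
Proof.
move=> G0dom Fdom Ftot; set U := \bigcup_(G in F) G.
have common z1 z2 : (U `|` G0) z1 -> (U `|` G0) z2 ->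
    exists2 G, norm_dominated_graph (G `|` G0) /\ G `<=` U &
      (G `|` G0) z1 /\ (G `|` G0) z2.
  move=> [[G1 FG1 G1z1]|G0z1] [[G2 FG2 G2z2]|G0z2].
  - have [G12|G21] := Ftot _ _ FG1 FG2.
    + by exists G2; split; [exact: Fdom|exact: bigcup_sup|left; exact: G12|left].
    + by exists G1; split; [exact: Fdom|exact: bigcup_sup|left|left; exact: G21].
  - by exists G1; split; [exact: Fdom|exact: bigcup_sup|left|right].
  - by exists G2; split; [exact: Fdom|exact: bigcup_sup|right|left].
  - by exists set0; split; rewrite ?set0U //; right.
split=> [a x y r s Uxr Uys|x r Uxr].
  have [G [[Glin _] GU] [Gxr Gys]] := common _ _ Uxr Uys.
  by case: (Glin a _ _ _ _ Gxr Gys) => [/GU|]; [left|right].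
by have [G [[_ Gdom] _] [Gxr _]] := common _ _ Uxr Uxr; exact: Gdom.
Qed.

(* The one-dimensional Hahn-Banach step: every lower bound r - |m - x0| is below
   every upper bound |m' + x0| - r', so the supremum of the former is a
   compatible value at [x0]. *)
Lemma dominated_graph_gap {G} x0 : norm_dominated_graph G -> G (0, 0) ->
  exists c, forall m r, G (m, r) -> r - `|m - x0| <= c /\ c <= `|m + x0| - r.
Proof.
move=> [Glin Gdom] G00.
pose S := [set y | exists m r, G (m, r) /\ y = r - `|m - x0|].
have S_ub : ubound S `|x0|.
  move=> _ [m [r [Gmr ->]]]; have := Gdom _ _ Gmr.
  by have := ler_normD (m - x0) x0; rewrite subrK; lra.
have S_sup : has_sup S.
  by split; [exists (0 - `|0 - x0|); exists 0, 0 | exists `|x0|].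
exists (sup S) => m r Gmr; split; first by apply: sup_upper_bound => //; exists m, r.
apply: ge_sup; first by case: S_sup.
move=> _ [m' [r' [Gm'r' ->]]].
have := Gdom _ _ (Glin 1 _ _ _ _ Gm'r' Gmr); rewrite scale1r mul1r.
have := ler_normD (m' - x0) (m + x0); rewrite addrACA addNr addr0; lra.
Qed.

Definition line_extension (G : set (X * R)) (x0 : X) (c : R) : set (X * R) :=
  [set z | exists m r t, G (m, r) /\ z = (m + t *: x0, r + t * c)].

Lemma dominated_graph_extend G x0 c : norm_dominated_graph G -> G (0, 0) ->
  (forall m r, G (m, r) -> r - `|m - x0| <= c /\ c <= `|m + x0| - r) ->
  norm_dominated_graph (line_extension G x0 c).
Proof.
move=> Gdom G00 gap; split.
  move=> a _ _ _ _ [m1 [r1 [t1 [G1 [-> ->]]]]] [m2 [r2 [t2 [G2 [-> ->]]]]].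
  exists (a *: m1 + m2), (a * r1 + r2), (a * t1 + t2); split; first exact: Gdom.1.
  congr (_, _); last by ring.
  by rewrite scalerDr scalerA addrACA scalerDl.
move=> _ _ [m [r [t [Gmr [-> ->]]]]].
have [t_lt0|t_gt0|->] := ltgtP t 0; last first.
- by rewrite scale0r mul0r !addr0; exact: Gdom.2.
- have [_] := gap _ _ (dominated_graphZ t^-1 Gdom G00 Gmr).
  have -> : t^-1 *: m + x0 = t^-1 *: (m + t *: x0).
    by rewrite scalerDr scalerA mulVf ?gt_eqF // scale1r.
  rewrite normrZ gtr0_norm ?invr_gt0 // => /(ler_wpM2l (ltW t_gt0)).
  by rewrite mulrBr !mulrA divff ?gt_eqF // !mul1r; lra.
- have nt_gt0 : 0 < - t by rewrite oppr_gt0.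
  have [+ _] := gap _ _ (dominated_graphZ (- t)^-1 Gdom G00 Gmr).
  have -> : (- t)^-1 *: m - x0 = (- t)^-1 *: (m + t *: x0).
    by rewrite scalerDr scalerA invrN mulNr mulVf ?lt_eqF // scaleN1r.
  rewrite normrZ gtr0_norm ?invr_gt0 // => /(ler_wpM2l (ltW nt_gt0)).
  by rewrite mulrBr !mulrA divff ?gt_eqF // !mul1r; lra.
Qed.

Lemma norming_functional (u : X) : exists phi : X -> R,
  [/\ linear_form phi, forall x, `|phi x| <= `|x| & phi u = `|u|].
Proof.
pose G0 := [set z | exists t, z = (t *: u, t * `|u|)].
have G0dom := dominated_graph_line u.
(* Zorn's lemma is applied to the sets [A] with [A `|` G0] dominated, so that
   the empty chain is admissible and the maximal graph contains [G0]. *)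
have [A [Adom Amax]] := Zorn_bigcup (P := fun A => norm_dominated_graph (A `|` G0))
  (fun F => dominated_graph_bigcup G0dom).
set G := A `|` G0 in Adom.
have G0G : G0 `<=` G by move=> z; right.
have G00 : G (0, 0) by apply: G0G; exists 0; rewrite scale0r mul0r.
have Gtot x : exists r, G (x, r).
  apply: contrapT => Gx; have [c gap] := dominated_graph_gap x Adom G00.
  have GE : G `<=` line_extension G x c.
    by move=> [m r] Gmr; exists m, r, 0; rewrite scale0r mul0r !addr0.
  have Exc : line_extension G x c (x, c).
    by exists 0, 0, 1; rewrite scale1r mul1r !add0r.
  apply: (Amax (line_extension G x c)).
    split; first by move=> z Az; apply: GE; left.
    by move=> /(_ _ Exc) Axc; apply: Gx; exists c; left.
  have -> : line_extension G x c `|` G0 = line_extension G x c.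
    by apply/setUidPl; exact: subset_trans G0G GE.
  exact: dominated_graph_extend.
pose phi x := projT1 (cid (Gtot x)).
have Gphi x : G (x, phi x) by rewrite /phi; case: cid.
have phi_lin : linear_form phi.
  by move=> a x y; apply: (dominated_graph_uniq Adom (Gphi _)); apply: Adom.1.
exists phi; split => // [x|].
  rewrite ler_norml (Adom.2 _ _ (Gphi x)) andbT lerNl -linear_formN //.
  by rewrite -normrN; exact: Adom.2.
by apply: (dominated_graph_uniq Adom (Gphi u)); apply: G0G; exists 1; rewrite scale1r mul1r.
Qed.

End NormingFunctional.

Section Subdifferential.
Context {R : realType} {X : normedModType R} {f : X -> \bar R}.

Lemma subdiff0_min {x} : subdiff f x (fun _ => 0) -> forall y, (f x <= f y)%E.
Proof. by move=> [_ fx] y; have := fx y; rewrite !sube0. Qed.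

Lemma subgradient_ineq {x eta s} y : subdiff f x eta -> f x = s%:E ->
  ((s + eta (y - x))%:E <= f y)%E.
Proof.
move=> [[eta_lin _] fx] fxE; have := fx y; rewrite fxE linear_formB //.
case: (f y) => [v| |]; last by rewrite addNye leeNy_eq.
  by rewrite -!EFinD !lee_fin => ?; lra.
by move=> _; exact: leey.
Qed.

Lemma dist0_subdiff_ge0 x : (0 <= dist0_subdiff f x)%E.
Proof. apply: le_ereal_inf_tmp => _ [eta [[eta_lin _] _] <-]. exact: dnorm_linear_ge0. Qed.

Lemma dist0_subdiff_le {x eta} : subdiff f x eta -> (dist0_subdiff f x <= dnorm eta)%E.
Proof. by move=> eta_sub; apply: ereal_inf_lbound; exists eta. Qed.

Lemma dense_subdiff_norming (v : X) {t : R} : subdiff_image_dense f -> 0 < t ->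
  exists x eta, [/\ subdiff f x eta, (dnorm eta <= (2 * t)%:E)%E & t * `|v| / 2 <= eta v].
Proof.
move=> dense t_gt0; have [phi [phi_lin phi_le phi_v]] := norming_functional v.
pose xi z := t * phi z.
have xi_lin : linear_form xi by move=> a u w; rewrite /xi phi_lin; ring.
have xi_le z : `|xi z| <= t * `|z| by rewrite normrM gtr0_norm // ler_wpM2l // ltW.
have xi_dual : dual_elt xi.
  by split; [exact: xi_lin | exact (linear_form_lipschitz_continuous xi_lin t_gt0 xi_le)].
have [x [eta eta_sub close]] := dense xi xi_dual (t / 2) (divr_gt0 t_gt0 (ltr0Sn _ 1)).
have [[eta_lin _] _] := eta_sub.
have diff_lin : linear_form (fun z => xi z - eta z).
  by move=> a u w; rewrite xi_lin eta_lin; ring.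
have diff_le z : `|xi z - eta z| <= t / 2 * `|z|.
  exact: dnorm_le_norm diff_lin _ _ (ltW close).
exists x, eta; split => //.
  apply: dnorm_ub => z z1; have tz : t * `|z| <= t by rewrite ler_piMr // ltW.
  move: (xi_le z) (diff_le z); rewrite !ler_norml => /andP[? ?] /andP[? ?].
  by apply/andP; split; lra.
by move: (diff_le v); rewrite /xi phi_v ler_norml => /andP[? ?]; lra.
Qed.

Hypothesis f_proper : proper_fun f.

Lemma subdiff_fin {x eta} : subdiff f x eta -> exists s, f x = s%:E.
Proof.
case: f_proper => f_noo [x0 fx0] [_ /(_ x0)].
by move: (f_noo x) (f_noo x0) fx0; case: (f x) => [s| |]; case: (f x0) => // s0; exists s.
Qed.

Lemma growth_dist0_subdiff {xbar x r gamma p} : f xbar = r%:E -> x != xbar -> 0 < p ->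
  (f xbar + (gamma * `|x - xbar| `^ p)%:E <= f x)%E ->
  ((gamma * `|x - xbar| `^ (p - 1))%:E <= dist0_subdiff f x)%E.
Proof.
move=> fxbar xxbar p_gt0 growth; set w := `|x - xbar| in growth *.
have w_gt0 : 0 < w by rewrite normr_gt0 subr_eq0.
apply: le_ereal_inf_tmp => _ [eta eta_sub <-]; have [[eta_lin _] _] := eta_sub.
have [s fx] := subdiff_fin eta_sub.
have := subgradient_ineq xbar eta_sub fx; rewrite fxbar lee_fin => sub_xbar.
move: growth; rewrite fxbar fx -EFinD lee_fin => growth.
have eta_lb : gamma * w `^ (p - 1) * w <= eta (x - xbar).
  rewrite -mulrA [_ * w]mulrC mulr_powRB1 // ?normr_ge0 //.
  rewrite -opprB linear_formN //; lra.
case E : (dnorm eta) => [d| |]; last by have := dnorm_linear_ge0 eta_lin; rewrite E.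
  rewrite lee_fin -(ler_pM2r w_gt0); apply: le_trans eta_lb _.
  by apply: le_trans (ler_norm _) _; apply: dnorm_le_norm; rewrite ?E.
by rewrite leey.
Qed.

Lemma subdiff_lower_estimate {xbar r x eta d} y :
  subdiff f xbar (fun _ => 0) -> f xbar = r%:E -> subdiff f x eta ->
  (dnorm eta <= d%:E)%E -> ((r + eta (y - xbar) - d * `|x - xbar|)%:E <= f y)%E.
Proof.
move=> xbar_min fxbar eta_sub eta_le; have [[eta_lin _] _] := eta_sub.
have [s fx] := subdiff_fin eta_sub.
have r_le_s : r <= s by have := subdiff0_min xbar_min x; rewrite fxbar fx lee_fin.
apply: le_trans (subgradient_ineq y eta_sub fx); rewrite lee_fin.
have -> : eta (y - x) = eta (y - xbar) - eta (x - xbar).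
  by rewrite -linear_formB // opprB addrA subrK.
have := dnorm_le_norm eta_lin d (x - xbar) eta_le; rewrite ler_norml => /andP[? ?].
lra.
Qed.

End Subdifferential.

Lemma nneg_lee_poweR {R : realType} {r : R} {x y : \bar R} :
  0 <= r -> (0 <= x)%E -> (x <= y)%E -> (x `^ r <= y `^ r)%E.
Proof.
move=> r_ge0 x_ge0 xy; apply: gt0_ler_poweR => //; rewrite in_itv /= leey andbT //.
exact: le_trans xy.
Qed.

Lemma subregular_norm_le {R : realType} {X : normedModType R} {f : X -> \bar R}
    {xbar x : X} {eta : X -> R} {kappa a D : R} :
  0 <= kappa -> 0 <= a ->
  ((`|x - xbar|)%:E <= kappa%:E * dist0_subdiff f x `^ a)%E ->
  subdiff f x eta -> (dnorm eta <= D%:E)%E -> `|x - xbar| <= kappa * D `^ a.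
Proof.
move=> kappa_ge0 a_ge0 subreg eta_sub eta_le.
rewrite -lee_fin EFinM; apply: le_trans subreg _.
apply: lee_wpmul2l; first by rewrite lee_fin.
rewrite -poweR_EFin; apply: nneg_lee_poweR a_ge0 (dist0_subdiff_ge0 _) _.
exact: le_trans (dist0_subdiff_le eta_sub) eta_le.
Qed.

Section ConjugateExponents.
Context {R : realType} {p q : R}.
Hypotheses (p_gt1 : 1 < p) (q_gt1 : 1 < q) (pq_conj : p^-1 + q^-1 = 1).

Lemma conj_exp_addM : p + q = p * q.
Proof.
have := congr1 (fun s => p * q * s) pq_conj; rewrite mulr1 => <-.
by field; rewrite !gt_eqF // (lt_trans ltr01).
Qed.

Lemma conj_exp_subM : (p - 1) * (q - 1) = 1.
Proof. by have := conj_exp_addM; lra. Qed.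

Lemma conj_exp_subMr : (p - 1) * q = p.
Proof. by have := conj_exp_addM; lra. Qed.

Lemma conj_exp_div : q / p = q - 1.
Proof.
have p_neq0 : p != 0 by rewrite gt_eqF // (lt_trans ltr01).
by apply: (mulIf p_neq0); rewrite mulfVK //; have := conj_exp_addM; lra.
Qed.

Lemma conj_exp_subMdiv : (p - 1) * (q / p) = 1.
Proof. by rewrite conj_exp_div conj_exp_subM. Qed.

Lemma conj_exp_powRM (c w : R) : 0 <= c -> 0 <= w ->
  (c * w `^ (p - 1)) `^ q = c `^ q * w `^ p.
Proof. by move=> c_ge0 w_ge0; rewrite powRM ?powR_ge0 // -powRrM conj_exp_subMr. Qed.

End ConjugateExponents.

Section GrowthSubregularity.
Context {R : realType} {X : normedModType R} {f : X -> \bar R} {xbar : X} {p q : R}.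
Hypotheses (f_proper : proper_fun f) (xbar_min : subdiff f xbar (fun _ => 0)).
Hypotheses (p_gt1 : 1 < p) (q_gt1 : 1 < q) (pq_conj : p^-1 + q^-1 = 1).

Let p_gt0 : 0 < p. Proof. exact: lt_trans ltr01 p_gt1. Qed.
Let q_gt0 : 0 < q. Proof. exact: lt_trans ltr01 q_gt1. Qed.
Let qp_ge0 : 0 <= q / p. Proof. by rewrite ltW // divr_gt0. Qed.

Lemma growth_subregular :
  (exists2 gamma : R, 0 < gamma &
     forall x : X, (f xbar + (gamma * (`|x - xbar| `^ p))%:E <= f x)%E) ->
  (exists2 kappa : R, 0 < kappa &
     forall x : X, ((`|x - xbar|)%:E <= kappa%:E * poweR (dist0_subdiff f x) (q / p))%E).
Proof.
move=> [gamma gamma_gt0 growth]; have [r fxbar] := subdiff_fin f_proper xbar_min.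
have gq_gt0 : 0 < gamma `^ (q / p) by rewrite powR_gt0.
exists (gamma `^ (q / p))^-1 => [|x]; first by rewrite invr_gt0.
have [->|xxbar] := eqVneq x xbar.
  rewrite subrr normr0; apply: mule_ge0; last exact: poweR_ge0.
  by rewrite lee_fin invr_ge0 ltW.
set w := `|x - xbar|; have w_ge0 : 0 <= w := normr_ge0 _.
have rate_ge0 : (0 <= (gamma * w `^ (p - 1))%:E)%E.
  by rewrite lee_fin mulr_ge0 ?powR_ge0 ?ltW.
have := nneg_lee_poweR qp_ge0 rate_ge0 (growth_dist0_subdiff f_proper fxbar xxbar p_gt0 (growth x)).
rewrite poweR_EFin.
have -> : (gamma * w `^ (p - 1)) `^ (q / p) = gamma `^ (q / p) * w.
  by rewrite powRM ?powR_ge0 ?ltW // -powRrM conj_exp_subMdiv // powRr1.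
move=> /(lee_wpmul2l (_ : (0 <= ((gamma `^ (q / p))^-1)%:E)%E)).
by rewrite -EFinM mulKf ?gt_eqF //; apply; rewrite lee_fin invr_ge0 ltW.
Qed.

Lemma subregular_growth : subdiff_image_dense f ->
  (exists2 kappa : R, 0 < kappa &
     forall x : X, ((`|x - xbar|)%:E <= kappa%:E * poweR (dist0_subdiff f x) (q / p))%E) ->
  (exists2 gamma : R, 0 < gamma &
     forall x : X, (f xbar + (gamma * (`|x - xbar| `^ p))%:E <= f x)%E).
Proof.
move=> dense [kappa kappa_gt0 subreg]; have [r fxbar] := subdiff_fin f_proper xbar_min.
(* [c] is chosen so that [c `^ (q - 1) = K], which makes the loss
   [kappa (2 t) ^ q] exactly (c/4) |y - xbar|^p, half the gain [t |y - xbar| / 2]. *)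
pose K := (4 * kappa * 2 `^ q)^-1; pose c := K `^ (p - 1).
have K_gt0 : 0 < K by rewrite invr_gt0 !mulr_gt0 // powR_gt0.
have c_gt0 : 0 < c by rewrite powR_gt0.
exists (c / 4) => [|y]; first by rewrite divr_gt0.
have [->|yxbar] := eqVneq y xbar.
  by rewrite subrr normr0 powR0 ?gt_eqF // mulr0 adde0; exact: subdiff0_min.
set w := `|y - xbar|; have w_gt0 : 0 < w by rewrite normr_gt0 subr_eq0.
pose t := c * w `^ (p - 1); have t_gt0 : 0 < t by rewrite mulr_gt0 // powR_gt0.
have [x [eta [eta_sub eta_le eta_v]]] := dense_subdiff_norming (y - xbar) dense t_gt0.
have x_near := subregular_norm_le (ltW kappa_gt0) qp_ge0 (subreg x) eta_sub eta_le.
have t_w : t * w = c * w `^ p by rewrite /t -mulrA [_ * w]mulrC mulr_powRB1 ?ltW.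
have tq_w : kappa * (2 * t) `^ q = c / 4 * w `^ p.
  have cq : c `^ q = c * K.
    by rewrite -mulr_powRB1 ?ltW // /c -powRrM conj_exp_subM // powRr1 ?ltW.
  rewrite powRM ?ler0n ?ltW // conj_exp_powRM ?ltW // cq /K.
  by field; rewrite !gt_eqF // powR_gt0.
have far_term : 2 * t * `|x - xbar| <= c / 4 * w `^ p.
  rewrite -tq_w; apply: le_trans (ler_wpM2l _ x_near) _; first by rewrite mulr_ge0 ?ltW.
  by rewrite conj_exp_div // mulrCA mulr_powRB1 // mulr_ge0 // ltW.
apply: le_trans _ (subdiff_lower_estimate f_proper y xbar_min fxbar eta_sub eta_le).
by rewrite fxbar -EFinD lee_fin; move: eta_v; rewrite -/w; lra.
Qed.

End GrowthSubregularity.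

Theorem corollary4p3 (R : realType) (X : normedModType R)
  (f : X -> \bar R) (xbar : X) (p q : R) :
  proper_fun f ->
  subdiff f xbar (fun _ => 0) ->
  1 < p -> 1 < q -> p^-1 + q^-1 = 1 ->
  subdiff_image_dense f ->
  (exists2 gamma : R, 0 < gamma &
     forall x : X, (f xbar + (gamma * (`|x - xbar| `^ p))%:E <= f x)%E)
  <->
  (exists2 kappa : R, 0 < kappa &
     forall x : X, ((`|x - xbar|)%:E <= kappa%:E * poweR (dist0_subdiff f x) (q / p))%E).
Proof.
move=> f_proper xbar_min p_gt1 q_gt1 pq_conj dense; split.
  exact: growth_subregular.
exact: subregular_growth.
Qed.
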